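(* The pseudovariety $\mathsf G$ of all finite groups (in the signature of multiplication, identity and inversion) is strong.
   Context: For a pseudovariety $\mathsf U$ and finite set $A$, $\Omega_A\mathsf U$ is the free pro-$\mathsf U$ algebra on $A$ (for $\mathsf U=\mathsf G$, the free profinite group). A $\mathsf U$-pseudoidentity is $u=v$ with $u,v\in\Omega_B\mathsf U$, $B$ finite; it holds in $T\in\mathsf U$ if both sides agree under every continuous homomorphism $\Omega_B\mathsf U\to T$; $[\![\Sigma]\!]_{\mathsf U}$ is the class of members of $\mathsf U$ satisfying $\Sigma$. Provability: for a set $\Sigma$ of $\mathsf U$-pseudoidentities and finite $A$, $\Sigma_0\subseteq\Omega_A\mathsf U\times\Omega_A\mathsf U$ is the set of pairs $(\mathbf t(\varphi(u),w_1,\dots,w_n),\mathbf t(\varphi(v),w_1,\dots,w_n))$ with $u=v$ or $v=u$ in $\Sigma$ ($u,v\in\Omega_B\mathsf U$), $\varphi:\Omega_B\mathsf U\to\Omega_A\mathsf U$ a continuous homomorphism, $\mathbf t$ a term in the basic operations, $w_i\in\Omega_A\mathsf U$; $\Sigma_{2\alpha+1}$ is the transitive closure of $\Sigma_{2\alpha}$, $\Sigma_{2\alpha+2}$ the topological closure of $\Sigma_{2\alpha+1}$, unions at limit ordinals; $u=v$ is provable from $\Sigma$ if $(u,v)\in\bigcup_\alpha\Sigma_\alpha$. $\mathsf U$ is strong if for every set $\Sigma$ of $\mathsf U$-pseudoidentities, every $\mathsf U$-pseudoidentity valid in $[\![\Sigma]\!]_{\mathsf U}$ is provable from $\Sigma$.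 *)

From HB Require Import structures.
From mathcomp Require Import all_boot all_fingroup.
From Stdlib Require List.

Set Implicit Arguments.
Unset Strict Implicit.
Unset Printing Implicit Defensive.

Local Open Scope group_scope.

(* The free profinite group Omega_A G on a finite set A, realised as the
   group of A-ary implicit operations on finite groups: families
   w_T : (A -> T) -> T, indexed by all finite groups T, commuting with
   every group homomorphism. *)

Definition grp_hom (T T' : finGroupType) (h : T -> T') : Prop :=
  [/\ forall x y, h (x * y) = h x * h y, h 1 = 1 & forall x, h x^-1 = (h x)^-1].

Definition natural (A : Type) (w : forall T : finGroupType, (A -> T) -> T) : Prop :=
  forall (T T' : finGroupType) (h : T -> T'), grp_hom h ->
    forall f : A -> T, h (w T f) = w T' (fun a => h (f a)).

Record OmegaG (A : finType) := MkOmegaG {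
  om_val : forall T : finGroupType, (A -> T) -> T;
  om_nat : natural om_val }.

Definition om_mul A (u v : OmegaG A) : OmegaG A.
Proof.
refine (@MkOmegaG A (fun T f => om_val u f * om_val v f) _).
move=> T T' h hh f; case: (hh) => hM _ _; by rewrite hM (om_nat u hh) (om_nat v hh).
Defined.

Definition om_one A : OmegaG A.
Proof.
refine (@MkOmegaG A (fun T f => 1) _).
by move=> T T' h [hM h1 hV] f /=.
Defined.

Definition om_inv A (u : OmegaG A) : OmegaG A.
Proof.
refine (@MkOmegaG A (fun T f => (om_val u f)^-1) _).
move=> T T' h hh f; case: (hh) => _ _ hV; by rewrite hV (om_nat u hh).
Defined.

(* Profinite topology: the initial topology for the evaluation maps
   w |-> w_T f (T discrete).  A "probe" is such an evaluation; basic open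
   sets are given by agreement on a finite list of probes. *)

Record probe (A : finType) := Probe { pr_T : finGroupType; pr_f : A -> pr_T }.

Definition ev A (w : OmegaG A) (p : probe A) : pr_T p := om_val w (pr_f p).

Definition agree A (L : list (probe A)) (w w' : OmegaG A) : Prop :=
  forall p, List.In p L -> ev w p = ev w' p.

Definition closureR A (R : OmegaG A -> OmegaG A -> Prop) (x y : OmegaG A) : Prop :=
  forall L : list (probe A), exists x' y', [/\ R x' y', agree L x x' & agree L y y'].

Definition transitiveR A (R : OmegaG A -> OmegaG A -> Prop) : Prop :=
  forall x y z, R x y -> R y z -> R x z.

Definition om_hom B A (phi : OmegaG B -> OmegaG A) : Prop :=
  [/\ forall x y, phi (om_mul x y) = om_mul (phi x) (phi y),
      phi (om_one B) = om_one A
    & forall x, phi (om_inv x) = om_inv (phi x)].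

Definition om_cont B A (phi : OmegaG B -> OmegaG A) : Prop :=
  forall (w : OmegaG B) (p : probe A), exists L : list (probe B),
    forall w', agree L w w' -> ev (phi w') p = ev (phi w) p.

Definition omT_hom B (T : finGroupType) (phi : OmegaG B -> T) : Prop :=
  [/\ forall x y, phi (om_mul x y) = phi x * phi y,
      phi (om_one B) = 1
    & forall x, phi (om_inv x) = (phi x)^-1].

Definition omT_cont B (T : finGroupType) (phi : OmegaG B -> T) : Prop :=
  forall w : OmegaG B, exists L : list (probe B),
    forall w', agree L w w' -> phi w' = phi w.

Record pseudoid := PsId { ps_B : finType; ps_l : OmegaG ps_B; ps_r : OmegaG ps_B }.

Definition holds_in (T : finGroupType) B (u v : OmegaG B) : Prop :=
  forall phi : OmegaG B -> T, omT_hom phi -> omT_cont phi -> phi u = phi v.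

Definition models (T : finGroupType) (Sigma : pseudoid -> Prop) : Prop :=
  forall s, Sigma s -> holds_in T (ps_l s) (ps_r s).

(* terms t(x, w_1, ..., w_n) in the basic operations; the parameters w_i
   are represented as constants of Omega_A G, the hole is x *)
Inductive gterm (A : finType) :=
| tHole
| tConst of OmegaG A
| tMul of gterm A & gterm A
| tOne
| tInv of gterm A.

Fixpoint teval A (t : gterm A) (x : OmegaG A) : OmegaG A :=
  match t with
  | tHole => x
  | tConst w => w
  | tMul t1 t2 => om_mul (teval t1 x) (teval t2 x)
  | tOne => om_one A
  | tInv t1 => om_inv (teval t1 x)
  end.

(* Sigma_0 (together with the trivial pairs (w,w)) *)
Definition sigma0 (Sigma : pseudoid -> Prop) (A : finType) (x y : OmegaG A) : Prop :=
  x = y \/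
  exists (B : finType) (u v : OmegaG B) (phi : OmegaG B -> OmegaG A) (t : gterm A),
    [/\ Sigma (PsId u v) \/ Sigma (PsId v u), om_hom phi, om_cont phi,
        x = teval t (phi u) & y = teval t (phi v)].

(* the union of the transfinite sequence Sigma_alpha, i.e. the least relation
   containing Sigma_0 that is transitive and topologically closed *)
Definition provable (Sigma : pseudoid -> Prop) (A : finType) (u v : OmegaG A) : Prop :=
  forall R : OmegaG A -> OmegaG A -> Prop,
    (forall x y, sigma0 Sigma x y -> R x y) ->
    transitiveR R ->
    (forall x y, closureR R x y -> R x y) ->
    R u v.

Definition G_strong : Prop :=
  forall (Sigma : pseudoid -> Prop) (A : finType) (u v : OmegaG A),
    (forall T : finGroupType, models T Sigma -> holds_in T u v) ->
    provable Sigma u v.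

From mathcomp Require Import all_boot all_fingroup.
From mathcomp Require Import boolp.
From Stdlib Require Import Relations.

Set Implicit Arguments.
Unset Strict Implicit.
Unset Printing Implicit Defensive.
Local Open Scope group_scope.

(* Provability is the topological closure of sigma1, the transitive closure of
   Sigma_0, which is already compatible with the group operations. So it suffices to
   approximate (u, v) by sigma1-pairs at every probe, and, after taking products and
   corestricting, at every probe g : A -> S whose image generates S.  The sigma1-pairs
   evaluated at g cut out a normal subgroup N of S, and S/N satisfies Sigma: a
   continuous homomorphism Omega_B G -> S/N is determined by the images of the
   generators, so it factors through a substitution Omega_B G -> Omega_A G, and
   substitution instances of Sigma lie in Sigma_0.  Hence S/N satisfies u = v, i.e.
   u_g = n v_g with n in N, and a sigma1-pair witnessing n in N, multiplied on the
   right by v, approximates (u, v). *)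

Lemma om_ext A (u v : OmegaG A) : om_val u = om_val v -> u = v.
Proof.
case: u v => fu hu [fv hv] /= efv; subst fv.
by rewrite (Prop_irrelevance hu hv).
Qed.

Definition gen (A : finType) (a : A) : OmegaG A.
Proof. by refine (@MkOmegaG A (fun T f => f a) _) => T T' h hh f. Defined.

Section Substitution.
Variables (B A : finType) (g : B -> OmegaG A).

Definition om_subst (w : OmegaG B) : OmegaG A.
Proof.
refine (@MkOmegaG A (fun T f => om_val w (fun b => om_val (g b) f)) _).
move=> T T' h hh f; rewrite (om_nat w hh); congr (om_val w _).
by apply: funext => b; rewrite (om_nat (g b) hh).
Defined.

Lemma om_subst_hom : om_hom om_subst.
Proof. by split=> [x y||x]; apply: om_ext. Qed.

Lemma om_subst_cont : om_cont om_subst.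
Proof.
move=> w p; exists [:: Probe (fun b => ev (g b) p)] => w' agree_w.
by have := agree_w _ (or_introl erefl); rewrite /ev /= => ->.
Qed.

End Substitution.

Lemma holds_in_eval (T : finGroupType) B (u v : OmegaG B) :
  holds_in T u v -> forall f : B -> T, om_val u f = om_val v f.
Proof.
move=> uv f; apply: (uv (fun w => om_val w f)); first by split.
by move=> w; exists [:: Probe f] => w' agree_w; exact/esym/(agree_w _ (or_introl erefl)).
Qed.

Lemma grp_hom_fst (T1 T2 : finGroupType) : grp_hom (@fst T1 T2).
Proof. by split. Qed.

Lemma grp_hom_snd (T1 T2 : finGroupType) : grp_hom (@snd T1 T2).
Proof. by split. Qed.

(* The witness is the product of the probes in [L]. *)
Lemma agree_single_probe (A : finType) (L : list (probe A)) :
  exists p : probe A, forall w w' : OmegaG A, ev w p = ev w' p -> agree L w w'.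
Proof.
elim: L => [|q L [p agree_p]].
  by exists (@Probe A {perm unit} (fun _ => 1)) => w w' _ p [].
pose F a := (pr_f q a, pr_f p a).
exists (Probe F) => w w' e r /=.
have evq x : ev x q = (om_val x F).1 := esym (om_nat x (@grp_hom_fst _ _) F).
have evp x : ev x p = (om_val x F).2 := esym (om_nat x (@grp_hom_snd _ _) F).
rewrite /ev /= in e; case=> [<-|Lr]; first by rewrite !evq e.
by apply: agree_p Lr; rewrite !evp e.
Qed.

Section GeneratedSubgroup.
Variables (A : finType) (P : finGroupType) (f : A -> P).

Lemma om_val_subg (H : {group P}) (fH : forall a, f a \in H) (w : OmegaG A) :
  om_val w f = sgval (om_val w (fun a => subg H (f a))).
Proof.
have sgval_hom : grp_hom (@sgval _ H) by split=> [x y||x]; rewrite ?sgvalM ?sgval1 ?sgvalV.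
rewrite (om_nat w sgval_hom); congr (om_val w _).
by apply: funext => a; rewrite subgK.
Qed.

Lemma om_val_in_gen (w : OmegaG A) : om_val w f \in <<f @: A>>.
Proof.
by rewrite (@om_val_subg [group of <<f @: A>>]) ?subgP // => a; rewrite mem_gen ?imset_f.
Qed.

(* No closure under inverses is needed: in a finite group a submonoid is a subgroup. *)
Lemma gen_submonoid_eval (D : OmegaG A -> Prop) :
  D (om_one A) -> (forall x y, D x -> D y -> D (om_mul x y)) -> (forall a, D (gen a)) ->
  forall p, p \in <<f @: A>> -> exists2 w, D w & om_val w f = p.
Proof.
move=> D1 DM Dgen.
pose V := [set p | `[< exists2 w, D w & om_val w f = p >]].
have V_group : group_set V.
  apply/andP; split; first by rewrite inE; apply/asboolP; exists (om_one A).
  apply/subsetP => z /mulsgP [_ _ /[!inE] /asboolP [x Dx <-] /asboolP [y Dy <-] ->].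
  by apply/asboolP; exists (om_mul x y); first exact: DM.
have genV : <<f @: A>> \subset Group V_group.
  rewrite gen_subG; apply/subsetP => _ /imsetP [a _ ->].
  by rewrite inE; apply/asboolP; exists (gen a).
by move=> p /(subsetP genV); rewrite inE => /asboolP.
Qed.

End GeneratedSubgroup.

Lemma dense_gen_submonoid (A : finType) (D : OmegaG A -> Prop) :
  D (om_one A) -> (forall x y, D x -> D y -> D (om_mul x y)) -> (forall a, D (gen a)) ->
  forall (L : list (probe A)) (w : OmegaG A), exists2 w', D w' & agree L w w'.
Proof.
move=> D1 DM Dgen L w; have [[P f] agree_f] := agree_single_probe L.
have [w' Dw' ew'] := gen_submonoid_eval D1 DM Dgen (om_val_in_gen f w).
by exists w' => //; apply: agree_f; rewrite /ev ew'.
Qed.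

Lemma omT_hom_cont_val (B : finType) (T : finGroupType) (psi : OmegaG B -> T) :
  omT_hom psi -> omT_cont psi -> forall w, psi w = om_val w (fun b => psi (gen b)).
Proof.
move=> [psiM psi1 _] psi_cont w; have [L agree_psi] := psi_cont w.
pose D w' := psi w' = om_val w' (fun b => psi (gen b)).
have [||| w' Dw' agree_w'] := @dense_gen_submonoid _ D _ _ _ (Probe (fun b => psi (gen b)) :: L) w.
- by rewrite /D psi1.
- by move=> x y Dx Dy; rewrite /D psiM Dx Dy.
- by [].
rewrite -(agree_psi w') => [|p Lp]; last by apply: agree_w'; right.
by rewrite Dw'; apply/esym/(agree_w' _ (or_introl erefl)).
Qed.

(* The witness is the corestriction of [f] to the subgroup generated by its image. *)
Lemma onto_probe (A : finType) (P : finGroupType) (f : A -> P) :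
  exists (S : finGroupType) (g : A -> S),
    (forall s, exists w : OmegaG A, om_val w g = s) /\
    (forall w w' : OmegaG A, om_val w g = om_val w' g -> om_val w f = om_val w' f).
Proof.
pose H := [group of <<f @: A>>].
have fH a : f a \in H by rewrite mem_gen ?imset_f.
exists (subg_of H), (fun a => subg H (f a)); split=> [s|w w' e]; last first.
  by rewrite !(om_val_subg fH) e.
have [||| w _ ew] := @gen_submonoid_eval _ _ f (fun _ => True) _ _ _ (sgval s) (subgP s) => //.
by exists w; apply: subg_inj; rewrite -om_val_subg.
Qed.

Section Derivations.
Variables (Sigma : pseudoid -> Prop) (A : finType).

Definition sigma1 : OmegaG A -> OmegaG A -> Prop := clos_trans _ (@sigma0 Sigma A).

Fixpoint tplug (t s : gterm A) : gterm A :=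
  match t with
  | tHole => s
  | tConst w => tConst w
  | tMul t1 t2 => tMul (tplug t1 s) (tplug t2 s)
  | tOne => tOne A
  | tInv t1 => tInv (tplug t1 s)
  end.

Lemma teval_plug (t s : gterm A) x : teval (tplug t s) x = teval t (teval s x).
Proof. by elim: t => //= [t1 -> t2 ->|t1 ->]. Qed.

Lemma sigma0_context (t : gterm A) x y :
  sigma0 Sigma x y -> sigma0 Sigma (teval t x) (teval t y).
Proof.
case=> [-> | [B [u [v [phi [s [Suv phi_hom phi_cont -> ->]]]]]]]; first by left.
by right; exists B, u, v, phi, (tplug t s); rewrite !teval_plug.
Qed.

Lemma clos_trans_map (T : Type) (R : relation T) (F : T -> T) :
  (forall x y, R x y -> R (F x) (F y)) ->
  forall x y, clos_trans _ R x y -> clos_trans _ R (F x) (F y).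
Proof.
move=> RF x y; elim=> [{}x {}y /RF|x1 y1 z1 _ IH1 _ IH2]; first exact: t_step.
exact: t_trans IH1 IH2.
Qed.

Lemma sigma1_refl x : sigma1 x x.
Proof. by apply: t_step; left. Qed.

Lemma sigma1_context (t : gterm A) x y : sigma1 x y -> sigma1 (teval t x) (teval t y).
Proof. exact/clos_trans_map/sigma0_context. Qed.

Lemma sigma1_mul x y x' y' : sigma1 x y -> sigma1 x' y' -> sigma1 (om_mul x x') (om_mul y y').
Proof.
move=> /(sigma1_context (tMul (tHole A) (tConst x'))) xy.
move=> /(sigma1_context (tMul (tConst y) (tHole A))) xy'.
exact: t_trans xy xy'.
Qed.

Lemma sigma1_mulr x y z : sigma1 x y -> sigma1 (om_mul x z) (om_mul y z).
Proof. by move/sigma1_mul; apply; apply: sigma1_refl. Qed.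

Lemma sigma1_conj x y z :
  sigma1 x y -> sigma1 (om_mul (om_inv z) (om_mul x z)) (om_mul (om_inv z) (om_mul y z)).
Proof. exact: (sigma1_context (tMul (tConst (om_inv z)) (tMul (tHole A) (tConst z)))). Qed.

Lemma sigma1_min (R : OmegaG A -> OmegaG A -> Prop) :
  (forall x y, sigma0 Sigma x y -> R x y) -> transitiveR R ->
  forall x y, sigma1 x y -> R x y.
Proof. by move=> R0 Rtr x y; elim=> [|x1 y1 z1 _ ? _]; [apply: R0|apply: Rtr]. Qed.

Section OntoProbe.
Variables (S : finGroupType) (g : A -> S).
Hypothesis g_onto : forall s, exists w : OmegaG A, om_val w g = s.

(* [S / kerSigma] is the largest quotient of [S] in which, evaluated at [g],
   every [sigma1]-pair becomes an equality. *)
Definition kerSigma : {set S} :=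
  [set s | `[< exists x y, [/\ sigma1 x y, om_val x g = s & om_val y g = 1] >]].

Fact kerSigma_group_set : group_set kerSigma.
Proof.
apply/andP; split.
  by rewrite inE; apply/asboolP; exists (om_one A), (om_one A); split=> //; apply: sigma1_refl.
apply/subsetP => z /mulsgP [s s' /[!inE] /asboolP [x [y [xy xs y1]]]].
move=> /asboolP [x' [y' [xy' xs' y'1]]] ->.
apply/asboolP; exists (om_mul x x'), (om_mul y y').
by split; [apply: sigma1_mul | rewrite /= xs xs' | rewrite /= y1 y'1 mulg1].
Qed.

Canonical kerSigma_group := Group kerSigma_group_set.

Lemma kerSigma_conj s q : s \in kerSigma -> s ^ q \in kerSigma.
Proof.
have [z <-] := g_onto q; rewrite !inE => /asboolP [x [y [xy <- y1]]].
apply/asboolP; exists (om_mul (om_inv z) (om_mul x z)), (om_mul (om_inv z) (om_mul y z)).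
by split; [apply: sigma1_conj | rewrite /= conjgE | rewrite /= y1 mul1g mulVg].
Qed.

Lemma kerSigma_norm q : q \in 'N(kerSigma).
Proof.
apply/normP/setP => s; rewrite mem_conjg.
by apply/idP/idP => [/(kerSigma_conj q)|/kerSigma_conj]; rewrite ?conjgKV.
Qed.

Definition pi (s : S) : coset_of kerSigma := coset kerSigma s.

Lemma pi_hom : grp_hom pi.
Proof.
split=> [x y||x]; first exact: (morphM _ (kerSigma_norm x) (kerSigma_norm y)).
  exact: morph1.
exact: (morphV _ (kerSigma_norm x)).
Qed.

Lemma pi_sigma1 x y : sigma1 x y -> pi (om_val x g) = pi (om_val y g).
Proof.
move=> xy; rewrite -(mulgKV (om_val y g) (om_val x g)) /pi coset_kerl //.
rewrite inE; apply/asboolP; exists (om_mul x (om_inv y)), (om_mul y (om_inv y)).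
by split; [apply: sigma1_mulr | | rewrite /= mulgV].
Qed.

Lemma models_quotient : models (coset_of kerSigma) Sigma.
Proof.
move=> [B u v] Suv psi psi_hom psi_cont /=.
have lift_ex b : exists w, psi (gen b) = pi (om_val w g).
  by have [s _ ->] := cosetP (psi (gen b)); have [w <-] := g_onto s; exists w.
have [lift liftP] := choice lift_ex.
have psiE w : psi w = pi (om_val (om_subst lift w) g).
  rewrite /= (om_nat w pi_hom) (omT_hom_cont_val psi_hom psi_cont w).
  by congr (om_val w _); apply: funext => b; rewrite liftP.
rewrite !psiE; apply/pi_sigma1/t_step; right.
exists B, u, v, (om_subst lift), (tHole A).
by split; [left | apply: om_subst_hom | apply: om_subst_cont | |].
Qed.

Lemma sigma1_onto_probe (u v : OmegaG A) :
  (forall T : finGroupType, models T Sigma -> holds_in T u v) ->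
  exists x y, [/\ sigma1 x y, om_val x g = om_val u g & om_val y g = om_val v g].
Proof.
move=> uv; have := holds_in_eval (uv _ models_quotient) (fun a => pi (g a)).
rewrite -!(om_nat _ pi_hom) => /(rcoset_kercosetP (kerSigma_norm _) (kerSigma_norm _)).
case/rcosetP=> _ /[!inE] /asboolP [x [y [xy <- y1]]] uvg.
exists (om_mul x v), (om_mul y v); split; first exact: sigma1_mulr.
  by rewrite uvg.
by rewrite /= y1 mul1g.
Qed.

End OntoProbe.
End Derivations.

Theorem corollary8p2 :
  forall (Sigma : pseudoid -> Prop) (A : finType) (u v : OmegaG A),
    (forall T : finGroupType, models T Sigma -> holds_in T u v) ->
    provable Sigma u v.
Proof.
move=> Sigma A u v uv R R0 Rtr Rcl; apply: Rcl => L.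
have [[P f] agree_f] := agree_single_probe L.
have [S [g [g_onto g_sep]]] := onto_probe f.
have [x [y [xy ex ey]]] := sigma1_onto_probe g_onto uv.
exists x, y; split; first exact: sigma1_min xy.
- by apply: agree_f; apply: g_sep; rewrite ex.
- by apply: agree_f; apply: g_sep; rewrite ey.
Qed.
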